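(* Let $R$ be a ring and $I$ a nilpotent ideal of $R$. If $R/I$ is almost Armendariz, then $R$ is almost Armendariz.
   Context: All rings are associative with identity. For a ring $R$, $P(R)$ denotes the prime radical of $R$ (the intersection of all prime ideals of $R$, equivalently the set of strongly nilpotent elements of $R$). A ring $R$ is called almost Armendariz if whenever $f(x)=\sum_{i=0}^m a_ix^i$ and $g(x)=\sum_{j=0}^n b_jx^j\in R[x]$ satisfy $f(x)g(x)=0$, then $a_ib_j\in P(R)$ for all $0\le i\le m$, $0\le j\le n$. *)

From HB Require Import structures.
From mathcomp Require Import all_boot all_order all_algebra.
Set Implicit Arguments. Unset Strict Implicit. Unset Printing Implicit Defensive.
Import GRing.Theory.
Local Open Scope ring_scope.

Definition is_ideal (R : nzRingType) (I : R -> Prop) : Prop :=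
  [/\ I 0,
      (forall x y, I x -> I y -> I (x - y)),
      (forall r x, I x -> I (r * x)) &
      (forall r x, I x -> I (x * r))].

Definition is_prime_ideal (R : nzRingType) (P : R -> Prop) : Prop :=
  [/\ is_ideal P, ~ P 1 &
      (forall a b, (forall r, P (a * r * b)) -> P a \/ P b)].

Definition prime_radical (R : nzRingType) (x : R) : Prop :=
  forall P : R -> Prop, is_prime_ideal P -> P x.

Definition almost_armendariz (R : nzRingType) : Prop :=
  forall f g : {poly R}, f * g = 0 ->
    forall i j : nat, prime_radical (f`_i * g`_j).

(* Nilpotent ideal: I^n = 0 for some n, i.e. every product of n elements
   of I vanishes. *)
Definition nilpotent_ideal (R : nzRingType) (I : R -> Prop) : Prop :=
  exists n : nat, forall s : seq R, size s = n ->
    (forall k, (k < size s)%N -> I s`_k) -> \prod_(x <- s) x = 0.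

From HB Require Import structures.
From mathcomp Require Import all_boot all_order all_algebra.
From Stdlib Require Import Classical.
Import GRing.Theory.
Local Open Scope ring_scope.

(* If x were outside a prime ideal P, primeness would give r_1, ..., r_n with
   (x r_1) ... (x r_n) outside P; for x in a nilpotent ideal this product is
   0, so I lies in every prime ideal.  A prime ideal P of R then contains the
   kernel I of phi : R -> R/I, so phi(P) is a prime ideal of R/I with
   P = phi^-1(phi(P)); hence phi(x) in P(R/I) forces x in P(R).  Applying phi
   to the coefficients of f g = 0 transfers the almost Armendariz property. *)

Section PrimeIdeal.

Context {R : nzRingType} (P : R -> Prop).
Hypothesis primeP : is_prime_ideal P.

Lemma prime_ideal_notin_mul {a b : R} :
  ~ P a -> ~ P b -> exists r, ~ P (a * r * b).
Proof.
move=> nPa nPb; apply: NNPP => all_in.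
have [_ _ Pab] := primeP.
have [] := Pab a b => [r|//|//].
by apply: NNPP => nPr; apply: all_in; exists r.
Qed.

Lemma prime_ideal_notin_prod {x : R} : ~ P x -> forall k : nat,
  exists s : seq R, [/\ size s = k,
    (forall i, (i < size s)%N -> exists r, s`_i = x * r)
    & ~ P (\prod_(y <- s) y)].
Proof.
move=> nPx; elim=> [|k [s [size_s sxR nPs]]].
  exists [::]; split=> //; rewrite big_nil; have [_] := primeP; exact.
have [r nPxrs] := prime_ideal_notin_mul nPx nPs.
exists (x * r :: s); split; first by rewrite /= size_s.
  by case=> [|i] /=; [exists r | exact: sxR].
by rewrite big_cons.
Qed.

Lemma nilpotent_ideal_sub_prime (I : R -> Prop) :
  is_ideal I -> nilpotent_ideal I -> forall x, I x -> P x.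
Proof.
move=> [_ _ _ IMr] [n nilI] x Ix; apply: NNPP => nPx.
have [s [size_s sxR nPs]] := prime_ideal_notin_prod nPx n.
have [[P0 _ _ _] _ _] := primeP.
by apply: nPs; rewrite nilI // => i /sxR [r ->]; exact: IMr.
Qed.

End PrimeIdeal.

Lemma nilpotent_ideal_sub_prime_radical (R : nzRingType) (I : R -> Prop) :
  is_ideal I -> nilpotent_ideal I -> forall x, I x -> prime_radical x.
Proof. by move=> idI nilI x Ix P primeP; exact: nilpotent_ideal_sub_prime Ix. Qed.

Section SurjectiveImage.

Context {R S : nzRingType} (phi : {rmorphism R -> S}).
Hypothesis phi_surj : forall y : S, exists x : R, phi x = y.

Definition image_pred (P : R -> Prop) (y : S) : Prop :=
  exists x, phi x = y /\ P x.

Variable P : R -> Prop.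
Hypothesis idealP : is_ideal P.
Hypothesis kerP : forall x, phi x = 0 -> P x.

Lemma image_predK x : image_pred P (phi x) -> P x.
Proof.
case: idealP => P0 PB _ _ [z [phi_z Pz]].
have Pxz : P (x - z) by apply: kerP; rewrite rmorphB phi_z subrr.
by have := PB _ _ Pxz (PB _ _ P0 Pz); rewrite sub0r opprK subrK.
Qed.

Lemma image_is_ideal : is_ideal (image_pred P).
Proof.
case: idealP => P0 PB PMl PMr; split.
- by exists 0; rewrite rmorph0.
- by move=> _ _ [x [<- Px]] [y [<- Py]]; exists (x - y); rewrite rmorphB; auto.
- move=> r _ [x [<- Px]]; have [r' <-] := phi_surj r.
  by exists (r' * x); rewrite rmorphM; auto.
- move=> r _ [x [<- Px]]; have [r' <-] := phi_surj r.
  by exists (x * r'); rewrite rmorphM; auto.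
Qed.

Lemma image_is_prime_ideal : is_prime_ideal P -> is_prime_ideal (image_pred P).
Proof.
case=> _ nP1 Pab; split; first exact: image_is_ideal.
  by rewrite -(rmorph1 phi) => /image_predK.
move=> a' b'; have [a <-] := phi_surj a'; have [b <-] := phi_surj b' => abP.
have [Pa|Pb] : P a \/ P b.
  by apply: Pab => r; apply: image_predK; rewrite !rmorphM; exact: abP.
- by left; exists a.
- by right; exists b.
Qed.

End SurjectiveImage.

Lemma prime_radical_surj_reflect (R S : nzRingType) (phi : {rmorphism R -> S}) :
  (forall y : S, exists x : R, phi x = y) ->
  (forall x, phi x = 0 -> prime_radical x) ->
  forall x, prime_radical (phi x) -> prime_radical x.
Proof.
move=> phi_surj ker_rad x rad_phix P primeP.
have kerP x' : phi x' = 0 -> P x' by move/ker_rad; exact.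
have [idealP _ _] := primeP.
apply: (image_predK _ _ idealP kerP); apply: rad_phix.
exact: image_is_prime_ideal.
Qed.

Lemma almost_armendariz_rmorph_reflect (R S : nzRingType)
    (phi : {rmorphism R -> S}) :
  (forall x, prime_radical (phi x) -> prime_radical x) ->
  almost_armendariz S -> almost_armendariz R.
Proof.
move=> rad_reflect armS f g fg0 i j; apply: rad_reflect.
have phi_fg0 : map_poly phi f * map_poly phi g = 0.
  by rewrite -rmorphM fg0 rmorph0.
by rewrite rmorphM -!(coef_map phi); exact: armS.
Qed.

Theorem proposition2p6 (R S : nzRingType) (I : R -> Prop)
    (phi : {rmorphism R -> S}) :
  is_ideal I -> nilpotent_ideal I ->
  (forall y : S, exists x : R, phi x = y) ->
  (forall x : R, phi x = 0 <-> I x) ->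
  almost_armendariz S -> almost_armendariz R.
Proof.
move=> idI nilI phi_surj kerI.
apply: almost_armendariz_rmorph_reflect.
apply: prime_radical_surj_reflect phi_surj _ => x /kerI.
exact: nilpotent_ideal_sub_prime_radical.
Qed.
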